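(* There exists $\gamma_0>0$ such that for every $\gamma\in(0,\gamma_0]$ there exists $n_0$ such that the following holds for every even integer $n\ge n_0$. Suppose $G$ is a graph on $n$ vertices with $\sigma(G)\ge n-\gamma n$. Then one of the following holds: (i) $G$ admits a perfect matching; (ii) $G$ contains a $2\gamma$-independent set of size at least $\frac n2$; (iii) $G$ has exactly two connected components $C_1$ and $C_2$, each of odd order, and moreover, if $|C_i|\le\frac{1-\gamma}{2}n$ for some $i\in\{1,2\}$, then $C_i$ is a clique.
   Context: All graphs are finite and simple. $\sigma(G):=\min\{d(x)+d(y): x\ne y,\ xy\notin E(G)\}$ ($+\infty$ if $G$ is complete). For an $n$-vertex graph $G$ and $\gamma>0$, a set $S\subseteq V(G)$ is $\gamma$-independent if $G[S]$ has at most $\gamma n^2$ edges. *)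

From HB Require Import structures.
From mathcomp Require Import all_boot all_order all_algebra.
From mathcomp Require Import reals.
Set Implicit Arguments. Unset Strict Implicit. Unset Printing Implicit Defensive.
Import Order.TTheory GRing.Theory Num.Theory.
Local Open Scope ring_scope.

Definition simple_graph (T : finType) (e : rel T) : Prop :=
  symmetric e /\ irreflexive e.

Definition deg (T : finType) (e : rel T) (x : T) : nat := #|[set y | e x y]|.

(* sigma(G) >= s  (vacuous if G is complete, since sigma = +oo) *)
Definition sigma_ge (R : realType) (T : finType) (e : rel T) (s : R) : Prop :=
  forall x y : T, x != y -> ~~ e x y -> s <= ((deg e x + deg e y)%N)%:R.

Definition edges_in (T : finType) (e : rel T) (S : {set T}) : nat :=
  #|[set E in powerset S | (#|E| == 2)%N &&
      [forall x in E, forall y in E, (x != y) ==> e x y]]|.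

Definition gamma_independent (R : realType) (T : finType) (e : rel T)
    (g : R) (S : {set T}) : Prop :=
  (edges_in e S)%:R <= g * (#|T| ^ 2)%:R.

Definition perfect_matching (T : finType) (e : rel T) (M : {set {set T}}) : Prop :=
  (forall E, E \in M -> exists x y, [/\ E = [set x; y], x != y & e x y]) /\
  trivIset M /\ cover M = [set: T].

Definition has_perfect_matching (T : finType) (e : rel T) : Prop :=
  exists M, perfect_matching e M.

Definition components (T : finType) (e : rel T) : {set {set T}} :=
  [set [set y | connect e x y] | x : T].

Definition is_clique (T : finType) (e : rel T) (C : {set T}) : Prop :=
  forall x y, x \in C -> y \in C -> x != y -> e x y.

From HB Require Import structures.
From mathcomp Require Import all_boot all_order all_algebra.
From mathcomp Require Import reals.
From mathcomp Require Import zify lra.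
Set Implicit Arguments. Unset Strict Implicit. Unset Printing Implicit Defensive.
Import Order.TTheory GRing.Theory Num.Theory.

(* Fix a maximum matching M.  If it is not perfect, parity gives two exposed
   vertices u and v; they are non-adjacent, so deg u + deg v >= (1 - gamma) n.
   As M has no augmenting path of length 1, 3 or 5, every edge of M sends at
   most two edges to {u, v}, and at most one if it is thin: neither full
   (contained in N(u) or in N(v)) nor shared (containing a common neighbour of
   u and v).  Hence fewer than gamma n edges of M are thin.
   If at most 3 gamma n / 2 edges of M are full, the exposed vertices, the far
   ends of the shared edges, one end of each thin edge and both ends of each
   full edge form a set of at least n / 2 vertices in which every edge meets a
   full or a thin edge; it spans at most 2 gamma n^2 edges.
   Otherwise the degree-sum condition excludes every vertex other than u, v
   that is adjacent to neither of them and has degree at most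
   #shared + 2 #thin.  Then u and v are the only exposed vertices, no edge of
   M is shared, and the graph has exactly two components: the one of u (u, the
   full edges inside N(u) and the thin edges adjacent to these) and the one of
   v.  The first consists of u and whole edges of M, so both are odd.  A
   component of order at most (1 - gamma) n / 2 is a clique, since two
   non-adjacent vertices in it would have degree sum below (1 - gamma) n. *)

Lemma card_set_cond (T : finType) (A : {set T}) (P : pred T) :
  #|[set x in A | P x]| = \sum_(x in A) P x.
Proof.
rewrite -sum1_card big_mkcond [RHS]big_mkcond /=; apply: eq_bigr => x _.
by rewrite inE; case: (x \in A); case: (P x).
Qed.

Lemma card_setI_sum (T : finType) (A B : {set T}) :
  #|A :&: B| = \sum_(x in B) (x \in A).
Proof. by rewrite setIC; apply: card_set_cond. Qed.

Lemma card_setI2 (T : finType) (A : {set T}) a b : a != b ->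
  #|A :&: [set a; b]| = (a \in A) + (b \in A).
Proof. by move=> ab; rewrite card_setI_sum big_setU1 /= ?big_set1 // inE. Qed.

Lemma components_split (T : finType) (e : rel T) (A : {set T}) u v :
  symmetric e -> u \in A -> v \notin A ->
  (forall x y, e x y -> (x \in A) = (y \in A)) ->
  (forall t, t \in A -> connect e u t) -> (forall t, t \notin A -> connect e v t) ->
  components e = [set A; ~: A].
Proof.
move=> e_sym uA vA closedA connA connAC.
have csym := sym_connect_sym e_sym.
have comp x : [set y | connect e x y] = if x \in A then A else ~: A.
  apply/setP => y; rewrite inE.
  have same_side : connect e x y -> (x \in A) = (y \in A) by apply: closed_connect.
  case xA: (x \in A).
    apply/idP/idP => [/same_side <- //|yA].
    by apply: connect_trans (connA _ yA); rewrite csym connA.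
  rewrite inE; apply/idP/idP => [/same_side <-|yA]; first by rewrite xA.
  by apply: connect_trans (connAC _ yA); rewrite csym connAC // xA.
apply/setP => C; rewrite /components !inE; apply/imsetP/orP.
  by case=> x _ ->; rewrite comp; case: (x \in A); [left|right].
by case=> /eqP ->; [exists u => //; rewrite comp uA | exists v => //; rewrite comp (negbTE vA)].
Qed.

Lemma deg_nonadj_le (T : finType) (e : rel T) (C : {set T}) x y :
  irreflexive e -> (forall x y, e x y -> (x \in C) = (y \in C)) ->
  x \in C -> y \in C -> x != y -> ~~ e x y -> deg e x + 2 <= #|C|.
Proof.
move=> e_irr closedC xC yC xy nxy.
rewrite (cardsD1 x C) xC (cardsD1 y (C :\ x)) !inE eq_sym xy yC add1n addSn addnC.
rewrite ltnS ltnS /deg; apply: subset_leq_card; apply/subsetP => z; rewrite !inE => exz.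
rewrite -(closedC _ _ exz) xC andbT; apply/andP; split.
  by apply: contraNneq nxy => <-.
by apply: contraTneq exz => ->; rewrite e_irr.
Qed.

(** * Matchings and augmenting paths *)

Section Matching.
Variables (T : finType) (e : rel T).
Hypotheses (e_sym : symmetric e) (e_irr : irreflexive e).

Definition nbhd x := [set y | e x y].

Definition is_edge (E : {set T}) :=
  [exists x, exists y, (E == [set x; y]) && (x != y) && e x y].

Definition matching (M : {set {set T}}) :=
  [forall E in M, is_edge E] && trivIset M.

Definition max_matching M :=
  matching M /\ forall M', matching M' -> #|M'| <= #|M|.

Definition exposed (M : {set {set T}}) x := x \notin cover M.

Lemma is_edgeP E :
  reflect (exists x y, [/\ E = [set x; y], x != y & e x y]) (is_edge E).
Proof.
apply: (iffP existsP) => [[x /existsP[y /andP[/andP[/eqP -> ?] ?]]]|[x [y [-> ? ?]]]].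
  by exists x, y.
by exists x; apply/existsP; exists y; rewrite eqxx /=; apply/andP.
Qed.

Lemma max_matching_exists : exists M, max_matching M.
Proof.
have match0 : matching set0.
  by apply/andP; split; [apply/forall_inP => E | apply/trivIsetP => A B]; rewrite inE.
have [M matchM Mmax] := @arg_maxnP _ set0 matching (fun M => #|M|) match0.
by exists M; split => // M' /Mmax.
Qed.

Lemma matching_edge M E : matching M -> E \in M ->
  exists x y, [/\ E = [set x; y], x != y & e x y].
Proof. by case/andP => /forall_inP H _ /H /is_edgeP. Qed.

Lemma matching_trivIset M : matching M -> trivIset M.
Proof. by case/andP. Qed.

Lemma set0_notin_matching M : matching M -> set0 \notin M.
Proof.
move=> matchM; apply/negP => /(matching_edge matchM) [x [y [/setP /(_ x)]]].
by rewrite !inE eqxx.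
Qed.

Lemma matching_subset M (M' : {set {set T}}) : matching M -> M' \subset M -> matching M'.
Proof.
move=> matchM sub; apply/andP; split; last exact: trivIsetS sub (matching_trivIset matchM).
by apply/forall_inP => E /(subsetP sub) HE; apply/is_edgeP; apply: matching_edge HE.
Qed.

Lemma mem_cover (M : {set {set T}}) x E : E \in M -> x \in E -> x \in cover M.
Proof. by move=> HE xE; apply/bigcupP; exists E. Qed.

Lemma cover_subset (M M' : {set {set T}}) x :
  M' \subset M -> x \in cover M' -> x \in cover M.
Proof. by move=> sub /bigcupP [E HE xE]; apply: mem_cover (subsetP sub _ HE) xE. Qed.

Lemma matching_block_eq M E1 E2 x : matching M -> E1 \in M -> E2 \in M ->
  x \in E1 -> x \in E2 -> E1 = E2.
Proof.
move=> matchM H1 H2 x1 x2; apply/eqP; apply: contraT => ne.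
have /trivIsetP tri := matching_trivIset matchM.
by move: (tri _ _ H1 H2 ne) => /disjointFr /(_ x1); rewrite x2.
Qed.

Lemma card_cover_matching M : matching M -> #|cover M| = #|M| * 2.
Proof.
move=> matchM; apply: card_uniform_partition; last first.
  by rewrite /partition eqxx matching_trivIset // set0_notin_matching.
by move=> E /(matching_edge matchM) [x [y [-> xy _]]]; rewrite cards2 xy.
Qed.

Lemma matching_edge_neq M a b : matching M -> [set a; b] \in M -> a != b.
Proof.
move=> matchM /(matching_edge matchM) [x [y [E xy _]]].
by move: (cards2 a b) (cards2 x y); rewrite E xy => ->; case: (a != b).
Qed.

Lemma cover_partner M (M' : {set {set T}}) x : matching M -> M' \subset M ->
  x \in cover M' -> exists y, [/\ [set x; y] \in M', x != y & e x y].
Proof.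
move=> matchM sub /bigcupP [E HE xE].
have [a [b [Eab ab eab]]] := matching_edge matchM (subsetP sub _ HE).
move: xE; rewrite Eab !inE => /orP [] /eqP ->; first by exists b; rewrite -Eab.
by exists a; rewrite setUC -Eab eq_sym e_sym.
Qed.

Lemma card_setI_cover M (A : {set T}) : matching M ->
  #|A :&: cover M| = \sum_(E in M) #|A :&: E|.
Proof.
move=> matchM; rewrite card_setI_sum (big_trivIset M (matching_trivIset matchM)) /=.
by apply: eq_bigr => E _; rewrite card_setI_sum.
Qed.

Lemma deg_cover_sum M x : matching M -> nbhd x \subset cover M ->
  deg e x = \sum_(E in M) #|nbhd x :&: E|.
Proof. by move=> matchM sub; rewrite -card_setI_cover // (setIidPl sub). Qed.

Lemma subset_nbhd2 w a b : ([set a; b] \subset nbhd w) = e w a && e w b.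
Proof. by rewrite subUset !sub1set !inE. Qed.


Lemma perfect_or_exposed_pair M : max_matching M -> ~~ odd #|T| ->
  perfect_matching e M \/ exists u v, [/\ exposed M u, exposed M v & u != v].
Proof.
move=> [matchM _] n_even; have [cov|ncov] := eqVneq (cover M) [set: T].
  left; split; first by move=> E; apply: matching_edge matchM.
  by split; first exact: matching_trivIset matchM.
right; have k_even : ~~ odd #|~: cover M|.
  move: n_even; rewrite -(cardsC (cover M)) (card_cover_matching matchM).
  by rewrite oddD oddM andbF.
have k_pos : 0 < #|~: cover M|.
  by rewrite card_gt0; apply: contraNneq ncov => k0; rewrite -[cover M]setCK k0 setC0.
have /card_gt1P [x [y [xC yC xy]]] : 1 < #|~: cover M|.
  by move: k_even k_pos; case: #|_| => [|[]].
by exists x, y; rewrite /exposed -!in_setC.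
Qed.

Lemma matching_setU1 M x y : matching M -> x != y -> e x y ->
  x \notin cover M -> y \notin cover M ->
  matching ([set x; y] |: M) /\ #|[set x; y] |: M| = #|M|.+1.
Proof.
move=> matchM xy exy xC yC.
have dis : {in M, forall B : {set T}, [disjoint [set x; y] & B]}.
  move=> B HB; rewrite disjoint_sym; apply/pred0P => z /=.
  apply/negP => /andP [zB]; rewrite !inE => /orP [] /eqP ?; subst z.
    by rewrite (mem_cover HB zB) in xC.
  by rewrite (mem_cover HB zB) in yC.
have [tri nin] := trivIsetU1 dis (matching_trivIset matchM) (set0_notin_matching matchM).
split; last by rewrite cardsU1 nin.
apply/andP; split => //; apply/forall_inP => E /setU1P [->|HE].
  by apply/is_edgeP; exists x, y.
by apply/is_edgeP; apply: matching_edge HE.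
Qed.

Lemma no_augmenting_path1 M x y : max_matching M -> exposed M x -> exposed M y ->
  x != y -> e x y -> False.
Proof.
move=> [matchM Mmax] x_exp y_exp xy exy.
have [matchM' cardM'] := matching_setU1 matchM xy exy x_exp y_exp.
by have := Mmax _ matchM'; rewrite cardM' ltnn.
Qed.

Lemma nbhd_exposed_subset M x : max_matching M -> exposed M x ->
  nbhd x \subset cover M.
Proof.
move=> maxM x_exp; apply/subsetP => y; rewrite inE => exy; apply: contraT => y_exp.
have xy : x != y by apply: contraTneq exy => ->; rewrite e_irr.
by case: (no_augmenting_path1 maxM x_exp y_exp xy exy).
Qed.

(* Replacing [a; b] by [u; a] moves the exposed vertex from u to b. *)
Lemma switch_edge M u a b : max_matching M -> exposed M u -> [set a; b] \in M ->
  a != b -> e u a ->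
  exists M', [/\ max_matching M', exposed M' b,
    (forall w, exposed M w -> w != u -> exposed M' w)
    & (forall E, E \in M -> E != [set a; b] -> E \in M')].
Proof.
move=> [matchM Mmax] u_exp abM ab eua.
have ua : u != a by apply: contraNneq u_exp => ->; rewrite (mem_cover abM) // !inE eqxx.
have ub : u != b.
  by apply: contraNneq u_exp => ->; rewrite (mem_cover abM) // !inE eqxx orbT.
set M0 := M :\ [set a; b].
have cover0 z : z \in cover M0 -> z \in cover M /\ z \notin [set a; b].
  case/bigcupP => E; rewrite in_setD1 => /andP [nE HE] zE; split; first exact: mem_cover HE zE.
  by apply: contra nE => zab; rewrite (matching_block_eq matchM HE abM zE zab).
have u_exp0 : u \notin cover M0 by apply: contra u_exp => /cover0 [].
have a_exp0 : a \notin cover M0 by apply/negP => /cover0 []; rewrite !inE eqxx.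
have matchM0 : matching M0 := matching_subset matchM (subsetDl M _).
have [matchM' cardM'] := matching_setU1 matchM0 ua eua u_exp0 a_exp0.
have cardM0 : #|M0|.+1 = #|M| by rewrite (cardsD1 [set a; b] M) abM add1n.
exists ([set u; a] |: M0); split.
- by split => // M'' /Mmax; rewrite cardM' cardM0.
- apply/negP => /bigcupP [E /setU1P [->|HE] bE].
    by move: bE; rewrite !inE => /orP [] /eqP bE; [move: ub | move: ab]; rewrite bE eqxx.
  by have /cover0 [_] := mem_cover HE bE; rewrite !inE eqxx orbT.
- move=> w w_exp wu; apply/negP => /bigcupP [E /setU1P [->|HE] wE].
    move: wE; rewrite !inE => /orP [] /eqP wE; first by rewrite wE eqxx in wu.
    by move: w_exp; rewrite /exposed wE (mem_cover abM) // !inE eqxx.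
  by have /cover0 [] := mem_cover HE wE; rewrite (negbTE w_exp).
- by move=> E HE nE; apply/setU1P; right; rewrite !inE nE HE.
Qed.

Lemma no_augmenting_path3 M x y a b : max_matching M -> exposed M x -> exposed M y ->
  x != y -> [set a; b] \in M -> a != b -> e x a -> e b y -> False.
Proof.
move=> maxM x_exp y_exp xy abM ab exa eby.
have [M' [maxM' b_exp' keep_exp _]] := switch_edge maxM x_exp abM ab exa.
have y_exp' : exposed M' y by apply: keep_exp; rewrite // eq_sym.
apply: (no_augmenting_path1 maxM' b_exp' y_exp' _ eby).
by apply: contraNneq y_exp => <-; rewrite (mem_cover abM) // !inE eqxx orbT.
Qed.

Lemma no_augmenting_path5 M x y a b c d : max_matching M -> exposed M x ->
  exposed M y -> x != y -> [set a; b] \in M -> [set c; d] \in M ->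
  [set a; b] != [set c; d] -> a != b -> c != d ->
  e x a -> e b d -> e c y -> False.
Proof.
move=> maxM x_exp y_exp xy abM cdM ne ab cd exa ebd ecy.
have [M' [maxM' b_exp' keep_exp keep_edge]] := switch_edge maxM x_exp abM ab exa.
have y_exp' : exposed M' y by apply: keep_exp; rewrite // eq_sym.
have cdM' : [set c; d] \in M' by apply: keep_edge; rewrite // eq_sym.
have yb : y != b.
  by apply: contraNneq y_exp => ->; rewrite (mem_cover abM) // !inE eqxx orbT.
by apply: (no_augmenting_path3 maxM' y_exp' b_exp' yb cdM' cd); rewrite e_sym.
Qed.

Lemma switch_exposed M u x : max_matching M -> exposed M u ->
  (x = u \/ exists a, [/\ [set a; x] \in M, a != x & e u a]) ->
  exists M', [/\ max_matching M', exposed M' x,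
    (forall w, exposed M w -> w != u -> exposed M' w)
    & (forall E, E \in M -> x \notin E -> E \in M')].
Proof.
move=> maxM u_exp [->|[a [axM ax eua]]]; first by exists M; split.
have [M' [maxM' x_exp' keep_exp keep_edge]] := switch_edge maxM u_exp axM ax eua.
exists M'; split => // E HE xE; apply: keep_edge => //.
by apply: contraNneq xE => ->; rewrite !inE eqxx orbT.
Qed.

Lemma edges_in_le (S W1 W2 Y : {set T}) :
  (forall x y, x \in S -> y \in S -> e x y ->
     (x \in W1 :|: W2) || (y \in W1 :|: W2)) ->
  (forall x y, x \in W1 -> y \in S -> e x y -> y \in Y) ->
  edges_in e S <= #|W1| * #|Y| + #|W2| * #|T|.
Proof.
move=> cover_edges W1_edges.
set P := setX W1 Y :|: setX W2 [set: T].
apply: (@leq_trans #|P|); last first.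
  by rewrite -cardsT -!cardsX; apply: leq_card_setU.
apply: (@leq_trans #|[set [set xy.1; xy.2] | xy in P]|); last exact: leq_imset_card.
apply: subset_leq_card; apply/subsetP => E; rewrite inE => /andP [].
rewrite powersetE => sES /andP [/cards2P [x [y [xy Exy]]] /forall_inP edgeE].
have xE : x \in E by rewrite Exy !inE eqxx.
have yE : y \in E by rewrite Exy !inE eqxx orbT.
have exy : e x y by move: (edgeE x xE) => /forall_inP /(_ y yE); rewrite xy.
have xS := subsetP sES _ xE; have yS := subsetP sES _ yE.
have eyx : e y x by rewrite e_sym.
case/orP: (cover_edges _ _ xS yS exy) => /setUP [] hW.
- by apply/imsetP; exists (x, y); rewrite // !inE /= hW (W1_edges _ _ hW yS exy).
- by apply/imsetP; exists (x, y); rewrite // !inE /= hW orbT.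
- apply/imsetP; exists (y, x); last by rewrite Exy setUC.
  by rewrite !inE /= hW (W1_edges _ _ hW xS eyx).
- by apply/imsetP; exists (y, x); rewrite ?Exy 1?setUC // !inE /= hW orbT.
Qed.

End Matching.

Section Star.
Variables (T : finType) (e : rel T).
Hypothesis e_sym : symmetric e.
Variables (M : {set {set T}}) (w : T).
Hypotheses (maxM : max_matching e M) (w_exp : exposed M w).

Definition nbhd_edges := [set E in M | E \subset nbhd e w].

(* The vertices reached from w by an alternating path of length 0 or 2. *)
Definition star := w |: cover nbhd_edges.

Lemma nbhd_edges_subset : nbhd_edges \subset M.
Proof. by apply/subsetP => E; rewrite inE => /andP []. Qed.

Lemma star_center : w \in star.
Proof. by rewrite setU11. Qed.

Lemma mem_star x : x \in cover nbhd_edges -> x \in star.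
Proof. by move=> xC; rewrite setU1r. Qed.

Lemma star_block x F : x \in star -> F \in M -> x \in F -> F \subset nbhd e w.
Proof.
move=> + HF xF; case/setU1P => [ex|/bigcupP [E]].
  by move: w_exp; rewrite /exposed -ex (mem_cover HF xF).
rewrite inE => /andP [HE sub] xE.
by rewrite -(matching_block_eq (proj1 maxM) HE HF xE xF).
Qed.

Lemma star_cases x : x \in star ->
  x = w \/ exists a, [/\ [set a; x] \in M, a != x & e w a].
Proof.
case/setU1P => [->|xC]; first by left.
have [y [xyM xy _]] := cover_partner e_sym (proj1 maxM) nbhd_edges_subset xC.
move: xyM; rewrite /nbhd_edges inE subset_nbhd2 => /andP [xyM /andP [_ ewy]].
by right; exists y; rewrite setUC eq_sym.
Qed.

Lemma connect_star x : x \in star -> connect e w x.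
Proof.
case/setU1P => [->|xC]; first exact: connect0.
have [y [xyM _ _]] := cover_partner e_sym (proj1 maxM) nbhd_edges_subset xC.
move: xyM; rewrite /nbhd_edges inE subset_nbhd2 => /andP [_ /andP [ewx _]].
exact: connect1.
Qed.

End Star.

(** * Two exposed vertices of a maximum matching *)

Section ExposedPair.
Variables (T : finType) (e : rel T).
Hypotheses (e_sym : symmetric e) (e_irr : irreflexive e).
Variables (M : {set {set T}}) (u v : T).
Hypotheses (maxM : max_matching e M) (u_exp : exposed M u) (v_exp : exposed M v).
Hypothesis uv : u != v.

Let matchM : matching e M := proj1 maxM.

Definition full (E : {set T}) := (E \subset nbhd e u) || (E \subset nbhd e v).
Definition shared (E : {set T}) := [exists a in E, e u a && e v a].

Definition Mfull := [set E in M | full E].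
Definition Mshared := [set E in M | shared E].
Definition Mthin := [set E in M | ~~ full E && ~~ shared E].

Lemma full2 a b : full [set a; b] = (e u a && e u b) || (e v a && e v b).
Proof. by rewrite /full !subset_nbhd2. Qed.

Lemma shared2 a b : shared [set a; b] = (e u a && e v a) || (e u b && e v b).
Proof.
apply/existsP/orP => [[x /andP []]|[H|H]].
- by rewrite !inE => /orP [] /eqP -> H; [left|right].
- by exists a; rewrite !inE eqxx.
- by exists b; rewrite !inE eqxx orbT.
Qed.

Lemma Mfull_subset : Mfull \subset M.
Proof. by apply/subsetP => E; rewrite inE => /andP []. Qed.

Lemma Mthin_subset : Mthin \subset M.
Proof. by apply/subsetP => E; rewrite inE => /andP []. Qed.

Lemma matching_edge_uv E : E \in M -> exists a b, [/\ E = [set a; b], a != b, e a b,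
   ~~ (e u a && e v b) & ~~ (e u b && e v a)].
Proof.
move=> HE; have [a [b [Eab ab eab]]] := matching_edge matchM HE.
have abM : [set a; b] \in M by rewrite -Eab.
have baM : [set b; a] \in M by rewrite setUC -Eab.
exists a, b; split => //; apply/negP => /andP [h1 h2].
  by apply: (no_augmenting_path3 maxM u_exp v_exp uv abM ab h1); rewrite e_sym.
have ba : b != a by rewrite eq_sym.
by apply: (no_augmenting_path3 maxM u_exp v_exp uv baM ba h1); rewrite e_sym.
Qed.

Lemma not_subset_nbhd_uv E : E \in M -> E \subset nbhd e u -> E \subset nbhd e v ->
  False.
Proof.
move=> HE; have [a [b [-> _ _ nc1 _]]] := matching_edge_uv HE.
by rewrite !subset_nbhd2 => /andP [eua _] /andP [_ evb]; move: nc1; rewrite eua evb.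
Qed.

(* As there is no augmenting path u-a-b-v, every edge of M meets N(u) and N(v)
   at most twice in total, and at most once if it is thin. *)
Lemma deg_uv_thin_le : deg e u + deg e v + #|Mthin| <= #|M| * 2.
Proof.
rewrite (deg_cover_sum matchM (nbhd_exposed_subset e_irr maxM u_exp)).
rewrite (deg_cover_sum matchM (nbhd_exposed_subset e_irr maxM v_exp)).
rewrite card_set_cond -!big_split /= -sum_nat_const; apply: leq_sum => E HE.
have [a [b [-> ab _ nc1 nc2]]] := matching_edge_uv HE.
rewrite !card_setI2 // full2 shared2 !inE.
by move: nc1 nc2; case: (e u a); case: (e u b); case: (e v a); case: (e v b).
Qed.

Lemma card_classes_le : #|Mshared| + #|Mfull| + #|Mthin| <= #|M|.
Proof.
rewrite !card_set_cond -!big_split /= -sum1_card; apply: leq_sum => E HE.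
have [a [b [-> _ _ nc1 nc2]]] := matching_edge_uv HE.
rewrite full2 shared2.
by move: nc1 nc2; case: (e u a); case: (e u b); case: (e v a); case: (e v b).
Qed.

Definition shared_tips :=
  [set b | [exists a, ([set a; b] \in M) && e u a && e v a]].

Lemma shared_tip_partner b : b \in shared_tips -> exists a,
  [/\ [set a; b] \in M, a != b, e u a, e v a & ~~ e b u && ~~ e b v].
Proof.
rewrite inE => /existsP [a /andP [/andP [abM eua] eva]].
exists a; split => //; first exact: matching_edge_neq matchM abM.
apply/andP; split; apply/negP => h; have ab := matching_edge_neq matchM abM.
  by apply: (no_augmenting_path3 maxM v_exp u_exp _ abM ab eva h); rewrite eq_sym.
exact: (no_augmenting_path3 maxM u_exp v_exp uv abM ab eua h).
Qed.

Lemma cover_Mfull_partner x : x \in cover Mfull -> exists y,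
  [/\ [set x; y] \in M, x != y & (e u x && e u y) || (e v x && e v y)].
Proof.
move=> xC; have [y [xyM xy _]] := cover_partner e_sym matchM Mfull_subset xC.
by exists y; move: xyM; rewrite inE full2 => /andP [? ?]; split.
Qed.

Lemma exposed_tip_nonadj w b : exposed M w -> b \in shared_tips -> ~~ e w b.
Proof.
move=> w_exp /shared_tip_partner [a [abM ab eua _ /andP [nbu _]]]; apply/negP => ewb.
have [wu|wu] := eqVneq w u; first by move: nbu; rewrite -wu e_sym ewb.
by apply: (no_augmenting_path3 maxM u_exp w_exp _ abM ab eua); rewrite 1?e_sym // eq_sym.
Qed.

Lemma shared_tips_nonadj b b' : b \in shared_tips -> b' \in shared_tips -> ~~ e b b'.
Proof.
move=> /shared_tip_partner [a [abM ab eua eva /andP [nbu nbv]]].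
move=> /shared_tip_partner [a' [abM' ab' eua' eva' _]]; apply/negP => ebb.
have [eq|ne] := eqVneq [set a; b] [set a'; b'].
  have : b' \in [set a; b] by rewrite eq !inE eqxx orbT.
  rewrite !inE => /orP [] /eqP eb'; last by move: ebb; rewrite eb' e_irr.
  have : b \in [set a'; b'] by rewrite -eq !inE eqxx orbT.
  rewrite !inE => /orP [] /eqP eb; last by move: ebb; rewrite eb e_irr.
  by move: nbu; rewrite eb e_sym eua'.
by apply: (no_augmenting_path5 e_sym maxM u_exp v_exp uv abM abM' ne ab ab' eua ebb);
  rewrite e_sym.
Qed.

Lemma full_exposed_nonadj x w : x \in cover Mfull -> exposed M w -> w != u -> w != v ->
  ~~ e x w.
Proof.
move=> /cover_Mfull_partner [x' [xx'M xx' H]] w_exp wu wv; apply/negP => exw.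
have x'xM : [set x'; x] \in M by rewrite setUC.
have x'x : x' != x by rewrite eq_sym.
case/orP: H => /andP [_ h].
  by apply: (no_augmenting_path3 maxM u_exp w_exp _ x'xM x'x h exw); rewrite eq_sym.
by apply: (no_augmenting_path3 maxM v_exp w_exp _ x'xM x'x h exw); rewrite eq_sym.
Qed.

Lemma full_tip_nonadj x b : x \in cover Mfull -> b \in shared_tips -> ~~ e x b.
Proof.
move=> /cover_Mfull_partner [x' [xx'M xx' H]] /shared_tip_partner [a [abM ab eua eva /andP [nbu nbv]]].
apply/negP => exb.
have x'xM : [set x'; x] \in M by rewrite setUC.
have x'x : x' != x by rewrite eq_sym.
have ne : [set a; b] != [set x'; x].
  apply/eqP => eq; have : b \in [set x'; x] by rewrite -eq !inE eqxx orbT.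
  rewrite !inE => /orP [] /eqP eb; move: nbu nbv; rewrite eb (e_sym _ u) (e_sym _ v);
    by case/orP: H => /andP [h1 h2]; rewrite ?h1 ?h2.
have ebx : e b x by rewrite e_sym.
case/orP: H => /andP [_ h].
  apply: (no_augmenting_path5 e_sym maxM v_exp u_exp _ abM x'xM ne ab x'x eva ebx).
    by rewrite eq_sym.
  by rewrite e_sym.
by apply: (no_augmenting_path5 e_sym maxM u_exp v_exp uv abM x'xM ne ab x'x eua ebx);
  rewrite e_sym.
Qed.

Lemma mem_cover_Mfull c d : [set c; d] \in M ->
  (e u c && e u d) || (e v c && e v d) -> c \in cover Mfull.
Proof.
move=> cdM cd_full; apply: (mem_cover (_ : [set c; d] \in Mfull)).
  by rewrite inE cdM full2.
by rewrite !inE eqxx.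
Qed.

Lemma mem_shared_tips c d : [set c; d] \in M -> e u c -> e v c -> d \in shared_tips.
Proof. by move=> cdM euc evc; rewrite inE; apply/existsP; exists c; rewrite cdM euc evc. Qed.

Lemma deg_le_shared_thin z : nbhd e z \subset cover M ->
  {in cover Mfull, forall x, ~~ e z x} -> {in shared_tips, forall b, ~~ e z b} ->
  deg e z <= #|Mshared| + 2 * #|Mthin|.
Proof.
move=> sub nfull ntip.
rewrite (deg_cover_sum matchM sub) !card_set_cond big_distrr -big_split /=.
apply: leq_sum => E HE.
have [a [b [Eab ab _ nc1 nc2]]] := matching_edge_uv HE.
have abM : [set a; b] \in M by rewrite -Eab.
have baM : [set b; a] \in M by rewrite setUC -Eab.
have full_end x y : [set x; y] \in M ->
    (e u x && e u y) || (e v x && e v y) -> ~~ e z x.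
  by move=> xyM xy_full; apply/nfull/(mem_cover_Mfull xyM xy_full).
have tip_end x y : [set x; y] \in M -> e u x -> e v x -> ~~ e z y.
  by move=> xyM eux evx; apply/ntip/(mem_shared_tips xyM eux evx).
move: (full_end _ _ abM) (full_end _ _ baM) (tip_end _ _ abM) (tip_end _ _ baM).
rewrite Eab !card_setI2 // full2 shared2 !inE.
by move: nc1 nc2; case: (e u a); case: (e u b); case: (e v a); case: (e v b);
  case: (e z a); case: (e z b) => //= H1 H2 H3 H4 H5 H6;
  do 2 repeat match goal with H : is_true true -> _ |- _ => specialize (H isT) end.
Qed.

Lemma shared_tip_low_deg b : b \in shared_tips ->
  deg e b <= #|Mshared| + 2 * #|Mthin|.
Proof.
move=> bT; apply: deg_le_shared_thin.
- apply/subsetP => y; rewrite inE => eby; apply: contraT => y_exp.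
  by move: (exposed_tip_nonadj y_exp bT); rewrite e_sym eby.
- by move=> x xF; rewrite e_sym; apply: full_tip_nonadj xF bT.
- by move=> b' b'T; apply: shared_tips_nonadj bT b'T.
Qed.

(** * The sparse case *)

Definition thin_reps := [set odflt u [pick y in E] | E : {set T} in Mthin].
Definition sparse_set := ~: cover M :|: shared_tips :|: cover Mfull :|: thin_reps.

Lemma sparse_set_meets E : E \in M -> 0 < #|sparse_set :&: E|.
Proof.
move=> HE; rewrite card_gt0; apply/set0Pn.
have [a [b [Eab _ _ _ _]]] := matching_edge_uv HE.
have aE : a \in E by rewrite Eab !inE eqxx.
have bE : b \in E by rewrite Eab !inE eqxx orbT.
case fullE: (full E).
  exists a; rewrite !inE aE andbT; apply/orP; left; apply/orP; right.
  by apply: (mem_cover _ aE); rewrite inE HE fullE.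
case sharedE: (shared E).
  have : shared [set a; b] by rewrite -Eab sharedE.
  rewrite shared2 => /orP [] /andP [h1 h2].
    exists b; rewrite !inE bE andbT; apply/orP; left; apply/orP; left.
    by apply/orP; right; apply/existsP; exists a; rewrite -Eab HE h1 h2.
  exists a; rewrite !inE aE andbT; apply/orP; left; apply/orP; left.
  by apply/orP; right; apply/existsP; exists b; rewrite setUC -Eab HE h1 h2.
have [y yE pickE] : exists2 y, y \in E & [pick y in E] = Some y.
  by case: pickP => [y yE|h]; [exists y | move: (h a); rewrite aE].
exists y; rewrite !inE yE andbT; apply/orP; right; apply/imsetP; exists E.
  by rewrite inE HE fullE sharedE.
by rewrite pickE.
Qed.

Lemma card_sparse_set : #|T| <= 2 * #|sparse_set|.
Proof.
have cardM : #|M| <= #|sparse_set :&: cover M|.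
  rewrite (card_setI_cover _ matchM) -sum1_card; apply: leq_sum => E HE.
  exact: sparse_set_meets.
have exposed_sub : ~: cover M \subset sparse_set :\: cover M.
  by rewrite setDE subsetI subxx /sparse_set -!setUA subsetUl.
have := subset_leq_card exposed_sub; have := cardsID (cover M) sparse_set.
have := cardsC (cover M); rewrite (card_cover_matching matchM).
lia.
Qed.

Lemma sparse_set_rest z : z \in sparse_set -> z \notin cover Mfull :|: thin_reps ->
  exposed M z || (z \in shared_tips).
Proof.
rewrite /sparse_set !in_setU negb_or in_setC => zS /andP [/negbTE zF /negbTE zR].
by move: zS; rewrite zF zR !orbF.
Qed.

Lemma edges_in_sparse_set : edges_in e sparse_set <=
  2 * #|Mfull| * (2 * #|Mfull| + #|Mthin| + 2) + #|Mthin| * #|T|.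
Proof.
have card_full : #|cover Mfull| = 2 * #|Mfull|.
  by rewrite (card_cover_matching (matching_subset matchM Mfull_subset)) mulnC.
have card_reps : #|thin_reps| <= #|Mthin| by apply: leq_imset_card.
rewrite -card_full; apply: leq_trans (edges_in_le e_sym (W1 := cover Mfull) (W2 := thin_reps)
   (Y := cover Mfull :|: thin_reps :|: [set u; v]) _ _) _.
- move=> x y xS yS exy; apply: contraT; rewrite negb_or => /andP [xW yW].
  have xy : x != y by apply: contraTneq exy => ->; rewrite e_irr.
  case/orP: (sparse_set_rest xS xW) => [x_exp|xB];
    case/orP: (sparse_set_rest yS yW) => [y_exp|yB].
  + by case: (no_augmenting_path1 maxM x_exp y_exp xy exy).
  + by move: (exposed_tip_nonadj x_exp yB); rewrite exy.
  + by move: (exposed_tip_nonadj y_exp xB); rewrite e_sym exy.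
  + by move: (shared_tips_nonadj xB yB); rewrite exy.
- move=> x y xW yS exy; rewrite in_setU; apply/norP => [[yW]].
  rewrite !inE negb_or => /andP [yu yv].
  case/orP: (sparse_set_rest yS yW) => [y_exp|yB].
    by move: (full_exposed_nonadj xW y_exp yu yv); rewrite exy.
  by move: (full_tip_nonadj xW yB); rewrite exy.
- apply: leq_add; last exact: leq_mul.
  rewrite leq_mul2l; apply/orP; right.
  apply: leq_trans (leq_card_setU _ _) _; rewrite cards2.
  have [U _] := leq_card_setU (cover Mfull) thin_reps; case: (u != v); lia.
Qed.

(** * The split case *)

Section Split.
Hypothesis deg_gt : forall z, z != u -> z != v -> ~~ e z u -> ~~ e z v ->
  #|Mshared| + 2 * #|Mthin| < deg e z.

Lemma low_deg_absurd z : z != u -> z != v -> ~~ e z u -> ~~ e z v ->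
  deg e z <= #|Mshared| + 2 * #|Mthin| -> False.
Proof. by move=> zu zv nzu nzv; rewrite leqNgt deg_gt. Qed.

Lemma neq_exposed z w : z \in cover M -> exposed M w -> z != w.
Proof. by move=> zC w_exp; apply: contraNneq w_exp => <-. Qed.

Lemma no_shared_vertex a b : [set a; b] \in M -> e u a -> e v a -> False.
Proof.
move=> abM eua eva; have bT := mem_shared_tips abM eua eva.
have /shared_tip_partner [_ [_ _ _ _ /andP [nbu nbv]]] := bT.
have bC : b \in cover M by apply: mem_cover abM _; rewrite !inE eqxx orbT.
exact: (low_deg_absurd (neq_exposed bC u_exp) (neq_exposed bC v_exp) nbu nbv
                       (shared_tip_low_deg bT)).
Qed.

Lemma shared_tips0 b : b \notin shared_tips.
Proof.
by apply/negP => /shared_tip_partner [a [abM _ eua eva _]]; apply: no_shared_vertex abM eua eva.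
Qed.

Lemma not_shared E : E \in M -> ~~ shared E.
Proof.
move=> HE; have [a [b [Eab _ _ _ _]]] := matching_edge_uv HE.
rewrite Eab shared2; apply/negP => /orP [] /andP [h1 h2].
  by apply: (no_shared_vertex (_ : [set a; b] \in M) h1 h2); rewrite -Eab.
by apply: (no_shared_vertex (_ : [set b; a] \in M) h1 h2); rewrite setUC -Eab.
Qed.

Lemma exposed_uv w : exposed M w -> (w == u) || (w == v).
Proof.
move=> w_exp; apply: contraT; rewrite negb_or => /andP [wu wv].
have nwu : ~~ e w u by apply/negP; apply: no_augmenting_path1 maxM w_exp u_exp wu.
have nwv : ~~ e w v by apply/negP; apply: no_augmenting_path1 maxM w_exp v_exp wv.
exfalso; apply: (low_deg_absurd wu wv nwu nwv); apply: deg_le_shared_thin.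
- exact: nbhd_exposed_subset.
- by move=> x xF; rewrite e_sym; apply: full_exposed_nonadj xF w_exp wu wv.
- by move=> b; rewrite (negbTE (shared_tips0 b)).
Qed.

Lemma star_uv_disjoint x : x \in star e M u -> x \in star e M v -> False.
Proof.
move=> xu xv; have [/bigcupP [F HF xF]|x_exp] := boolP (x \in cover M).
  exact: not_subset_nbhd_uv HF (star_block maxM u_exp xu HF xF)
                               (star_block maxM v_exp xv HF xF).
have star_exposed w : x \in star e M w -> x = w.
  case/setU1P => // /(cover_subset (nbhd_edges_subset e M w)).
  by rewrite (negbTE x_exp).
by move: uv; rewrite -(star_exposed _ xu) -(star_exposed _ xv) eqxx.
Qed.

Lemma star_neq x y : x \in star e M u -> y \in star e M v -> x != y.
Proof. by move=> xu yv; apply/eqP => exy; apply: (star_uv_disjoint xu); rewrite exy. Qed.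

Lemma switch_stars x y : x \in star e M u -> y \in star e M v -> exists M',
  [/\ max_matching e M', exposed M' x, exposed M' y &
      forall F, F \in M -> x \notin F -> y \notin F -> F \in M'].
Proof.
move=> xu yv.
have [M1 [maxM1 x_exp1 keep_exp1 keep_edge1]] :=
  switch_exposed maxM u_exp (star_cases e_sym maxM xu).
have v_exp1 : exposed M1 v by apply: keep_exp1; rewrite // eq_sym.
have yP : y = v \/ exists a, [/\ [set a; y] \in M1, a != y & e v a].
  case: (star_cases e_sym maxM yv) => [->|[a [ayM ay eva]]]; [by left | right].
  exists a; split => //; apply: keep_edge1 => //; apply/negP => xF.
  have yF : y \in [set a; y] by rewrite !inE eqxx orbT.
  exact: not_subset_nbhd_uv ayM (star_block maxM u_exp xu ayM xF)
                                (star_block maxM v_exp yv ayM yF).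
have [M2 [maxM2 y_exp2 keep_exp2 keep_edge2]] := switch_exposed maxM1 v_exp1 yP.
exists M2; split => //; last by move=> F HF xF yF; apply: keep_edge2 => //; apply: keep_edge1.
by apply: keep_exp2 => //; apply: star_neq (star_center e M v).
Qed.

Lemma star_nonadj x y : x \in star e M u -> y \in star e M v -> ~~ e x y.
Proof.
move=> xu yv; apply/negP => exy.
have [M' [maxM' x_exp' y_exp' _]] := switch_stars xu yv.
exact: no_augmenting_path1 maxM' x_exp' y_exp' (star_neq xu yv) exy.
Qed.

Lemma thin_notin_star w x F : exposed M w -> x \in star e M w -> F \in Mthin ->
  x \notin F.
Proof.
move=> w_exp xw; rewrite inE => /andP [HF /andP [not_full _]]; apply/negP => xF.
have := star_block maxM w_exp xw HF xF.
by case/orP: (exposed_uv w_exp) => /eqP -> sub; move: not_full; rewrite /full sub ?orbT.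
Qed.

Lemma thin_path3 x y a b : x \in star e M u -> y \in star e M v ->
  [set a; b] \in Mthin -> e x a -> e b y -> False.
Proof.
move=> xu yv abT exa eby; have abM := subsetP Mthin_subset _ abT.
have [M' [maxM' x_exp' y_exp' keep]] := switch_stars xu yv.
have abM' := keep _ abM (thin_notin_star u_exp xu abT) (thin_notin_star v_exp yv abT).
exact: no_augmenting_path3 maxM' x_exp' y_exp' (star_neq xu yv) abM'
                           (matching_edge_neq matchM abM) exa eby.
Qed.

Lemma thin_path5 x y a b c d : x \in star e M u -> y \in star e M v ->
  [set a; b] \in Mthin -> [set c; d] \in Mthin -> [set a; b] != [set c; d] ->
  e x a -> e b d -> e c y -> False.
Proof.
move=> xu yv abT cdT ne exa ebd ecy.
have abM := subsetP Mthin_subset _ abT; have cdM := subsetP Mthin_subset _ cdT.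
have [M' [maxM' x_exp' y_exp' keep]] := switch_stars xu yv.
have abM' := keep _ abM (thin_notin_star u_exp xu abT) (thin_notin_star v_exp yv abT).
have cdM' := keep _ cdM (thin_notin_star u_exp xu cdT) (thin_notin_star v_exp yv cdT).
exact: (no_augmenting_path5 e_sym maxM' x_exp' y_exp' (star_neq xu yv) abM' cdM' ne
  (matching_edge_neq matchM abM) (matching_edge_neq matchM cdM) exa ebd ecy).
Qed.

Definition adj_star w z := [exists x in star e M w, e z x].

Lemma vertex_cases t :
  [\/ t \in star e M u, t \in star e M v | t \in cover Mthin].
Proof.
have [/bigcupP [E HE tE]|t_exp] := boolP (t \in cover M); last first.
  by case/orP: (exposed_uv t_exp) => /eqP ->; [constructor 1 | constructor 2];
    apply: star_center.
have in_star w : E \subset nbhd e w -> t \in star e M w.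
  by move=> sub; apply/mem_star/(mem_cover _ tE); rewrite inE HE sub.
have [sub|nsub_u] := boolP (E \subset nbhd e u); first by constructor 1; apply: in_star.
have [sub|nsub_v] := boolP (E \subset nbhd e v); first by constructor 2; apply: in_star.
constructor 3; apply: (mem_cover _ tE).
by rewrite inE HE /full (negbTE nsub_u) (negbTE nsub_v) not_shared.
Qed.

Lemma cover_Mfull_star x : x \in cover Mfull ->
  (x \in star e M u) || (x \in star e M v).
Proof.
case/bigcupP => E; rewrite inE => /andP [HE /orP [] sub] xE; apply/orP; [left|right];
  by apply/mem_star/(mem_cover _ xE); rewrite inE HE sub.
Qed.

Lemma thin_adj_star z : z \in cover Mthin -> adj_star u z || adj_star v z.
Proof.
move=> zT; apply: contraT; rewrite negb_or => /andP [nu nv].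
have zC : z \in cover M := cover_subset Mthin_subset zT.
have no_adj w x : ~~ adj_star w z -> x \in star e M w -> ~~ e z x.
  by move=> nw xw; apply: contra nw => ezx; apply/existsP; exists x; rewrite xw.
have nzu := no_adj _ _ nu (star_center e M u).
have nzv := no_adj _ _ nv (star_center e M v).
exfalso; apply: (low_deg_absurd (neq_exposed zC u_exp) (neq_exposed zC v_exp) nzu nzv).
apply: deg_le_shared_thin.
- apply/subsetP => y; rewrite inE => ezy; apply: contraT => y_exp.
  by case/orP: (exposed_uv y_exp) => /eqP ey; [move: nzu | move: nzv]; rewrite -ey ezy.
- by move=> x /cover_Mfull_star /orP [] xw; [apply: no_adj nu xw | apply: no_adj nv xw].
- by move=> b; rewrite (negbTE (shared_tips0 b)).
Qed.

Lemma thin_edge_one_side z z' : [set z; z'] \in Mthin -> adj_star u z -> ~~ adj_star v z'.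
Proof.
move=> zT /existsP [x /andP [xu ezx]]; apply/negP => /existsP [y /andP [yv ezy]].
by apply: (thin_path3 xu yv zT _ ezy); rewrite e_sym.
Qed.

Lemma thin_adj_star_excl z : z \in cover Mthin -> adj_star u z -> ~~ adj_star v z.
Proof.
move=> zT zu; have [z' [zz'T _ _]] := cover_partner e_sym matchM Mthin_subset zT.
have z'zT : [set z'; z] \in Mthin by rewrite setUC.
have z'T : z' \in cover Mthin by apply: (mem_cover zz'T); rewrite !inE eqxx orbT.
case/orP: (thin_adj_star z'T) => z'_adj; first exact: thin_edge_one_side z'zT z'_adj.
by move: (thin_edge_one_side zz'T zu); rewrite z'_adj.
Qed.

Definition thin_u := [set z in cover Mthin | adj_star u z].

Definition side_u := star e M u :|: thin_u.

Lemma mem_thin_u z : (z \in thin_u) = (z \in cover Mthin) && adj_star u z.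
Proof. by rewrite inE. Qed.

Lemma thin_u_partner z z' : [set z; z'] \in Mthin -> (z \in thin_u) = (z' \in thin_u).
Proof.
have half a b : [set a; b] \in Mthin -> a \in thin_u -> b \in thin_u.
  move=> abT; rewrite !mem_thin_u => /andP [_ a_adj].
  have bT : b \in cover Mthin by apply: (mem_cover abT); rewrite !inE eqxx orbT.
  rewrite bT /=; case/orP: (thin_adj_star bT) => // b_adj.
  by move: (thin_edge_one_side abT a_adj); rewrite b_adj.
by move=> zT; apply/idP/idP; apply: half; rewrite // setUC.
Qed.

Lemma star_side_u x : x \in star e M u -> x \in side_u.
Proof. by move=> xu; rewrite in_setU xu. Qed.

Lemma star_v_notin_side_u y : y \in star e M v -> y \notin side_u.
Proof.
move=> yv; rewrite in_setU negb_or mem_thin_u negb_and; apply/andP; split.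
  by apply/negP => yu; apply: (star_uv_disjoint yu yv).
by apply/orP; left; apply/negP => /bigcupP [E HE yE]; move: (thin_notin_star v_exp yv HE); rewrite yE.
Qed.

Lemma side_u_no_cross x y : x \in side_u -> y \notin side_u -> e x y -> False.
Proof.
move=> xA yA exy.
have yP : (y \in star e M v) || (y \in cover Mthin) && ~~ adj_star u y.
  move: yA; rewrite in_setU mem_thin_u negb_or negb_and => /andP [yu nT].
  case: (vertex_cases y) => [yu'|->//|yT]; first by rewrite yu' in yu.
  by move: nT; rewrite yT /= => ->; rewrite orbT.
case/setUP: xA => [xu|]; last rewrite mem_thin_u => /andP [xT x_adj].
  case/orP: yP => [yv|/andP [_ /negP]]; first by move: (star_nonadj xu yv); rewrite exy.
  by apply; apply/existsP; exists x; rewrite xu e_sym exy.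
case/orP: yP => [yv|/andP [yT y_nadj]].
  by move/negP: (thin_adj_star_excl xT x_adj); apply; apply/existsP; exists y; rewrite yv exy.
(* x and y lie on thin edges on opposite sides: an augmenting path of length 5. *)
have [x' [xx'T _ _]] := cover_partner e_sym matchM Mthin_subset xT.
have [y' [yy'T _ _]] := cover_partner e_sym matchM Mthin_subset yT.
have : x' \in thin_u by rewrite -(thin_u_partner xx'T) mem_thin_u xT x_adj.
rewrite mem_thin_u => /andP [_ /existsP [x'' /andP [x''u ex'x'']]].
have y'T : y' \in cover Mthin by apply: (mem_cover yy'T); rewrite !inE eqxx orbT.
have /existsP [y'' /andP [y''v ey'y'']] : adj_star v y'.
  case/orP: (thin_adj_star y'T) => // y'_adj.
  by move: (thin_u_partner yy'T); rewrite !mem_thin_u yT y'T y'_adj (negbTE y_nadj).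
have x'xT : [set x'; x] \in Mthin by rewrite setUC.
have y'yT : [set y'; y] \in Mthin by rewrite setUC.
have ne : [set x'; x] != [set y'; y].
  apply/eqP => eq; have : y \in [set x'; x] by rewrite eq !inE eqxx orbT.
  rewrite !inE => /orP [] /eqP ey; last by move: exy; rewrite ey e_irr.
  by move/negP: y_nadj; apply; apply/existsP; exists x''; rewrite x''u ey ex'x''.
by apply: (thin_path5 x''u y''v x'xT y'yT ne _ exy ey'y''); rewrite e_sym.
Qed.

Lemma side_u_closed x y : e x y -> (x \in side_u) = (y \in side_u).
Proof.
move=> exy; apply/idP/idP => A; apply: contraT => nA.
  by case: (side_u_no_cross A nA exy).
by case: (side_u_no_cross A nA (_ : e y x)); rewrite e_sym.
Qed.

Lemma connect_side_u t : t \in side_u -> connect e u t.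
Proof.
rewrite in_setU => /orP [tu|]; first exact: (connect_star e_sym maxM tu).
rewrite mem_thin_u => /andP [_ /existsP [x /andP [xu etx]]].
by apply: connect_trans (connect_star e_sym maxM xu) (connect1 _); rewrite e_sym.
Qed.

Lemma connect_side_v t : t \notin side_u -> connect e v t.
Proof.
rewrite in_setU mem_thin_u negb_or negb_and => /andP [tu nT].
case: (vertex_cases t) => [tu'|tv|tT]; first by rewrite tu' in tu.
  exact: (connect_star e_sym maxM tv).
have /existsP [y /andP [yv ety]] : adj_star v t.
  by case/orP: (thin_adj_star tT) => // t_adj; move: nT; rewrite tT t_adj.
by apply: connect_trans (connect_star e_sym maxM yv) (connect1 _); rewrite e_sym.
Qed.

(* Apart from u, side_u is a union of edges of M. *)
Lemma odd_side_u : odd #|side_u|.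
Proof.
have exposed_part : side_u :\: cover M = [set u].
  apply/setP => t; rewrite in_setD in_set1; apply/andP/eqP => [[t_exp tA]|->].
    case/orP: (exposed_uv t_exp) => /eqP // tv.
    by move: tA; rewrite tv (negbTE (star_v_notin_side_u (star_center e M v))).
  by split; [exact: u_exp | exact: star_side_u (star_center e M u)].
rewrite -(cardsID (cover M) side_u) exposed_part cards1 addn1 /=.
rewrite (card_setI_cover _ matchM).
apply: (big_ind (fun n : nat => ~~ odd n)) => //.
  by move=> a b ha hb; rewrite oddD (negbTE ha) (negbTE hb).
move=> E HE; have [a [b [-> ab eab _ _]]] := matching_edge_uv HE.
by rewrite card_setI2 // (side_u_closed eab) addnn odd_double.
Qed.

Lemma components_side_u : components e = [set side_u; ~: side_u].
Proof.
exact: (components_split e_sym (star_side_u (star_center e M u))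
  (star_v_notin_side_u (star_center e M v)) side_u_closed connect_side_u connect_side_v).
Qed.

End Split.

Lemma card_matching_add2_le : #|M| * 2 + 2 <= #|T|.
Proof.
have sub : [set u; v] \subset ~: cover M.
  by apply/subsetP => x; rewrite !inE => /orP [] /eqP ->; [exact: u_exp | exact: v_exp].
have := subset_leq_card sub; rewrite cards2 uv -(card_cover_matching matchM).
by have := cardsC (cover M); lia.
Qed.

Lemma deg_uv_thin_add2_le : deg e u + deg e v + #|Mthin| + 2 <= #|T|.
Proof. by have := deg_uv_thin_le; have := card_matching_add2_le; lia. Qed.

Local Open Scope ring_scope.

Lemma sigma_ge_clique (R : realType) (C : {set T}) (s : R) :
  (forall x y, e x y -> (x \in C) = (y \in C)) -> sigma_ge e s ->
  2 * (#|C|%:R : R) <= s -> is_clique e C.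
Proof.
move=> closedC sigma small x y xC yC xy; apply: contraT => nxy.
have yx : y != x by rewrite eq_sym.
have nyx : ~~ e y x by rewrite e_sym.
have := deg_nonadj_le e_irr closedC xC yC xy nxy.
have := deg_nonadj_le e_irr closedC yC xC yx nyx.
have := sigma x y xy nxy; rewrite -!(ler_nat R) !natrD => *; lra.
Qed.

Lemma sparse_edge_count (R : realFieldType) (g : R) (p d n : nat) :
  0 < g -> g <= 1 / 100 -> 2 * (p%:R : R) <= 3 * g * n%:R -> (d%:R : R) <= g * n%:R - 2 ->
  ((2 * p * (2 * p + d + 2) + d * n)%N%:R : R) <= 2 * g * (n ^ 2)%N%:R.
Proof.
move=> g_gt0 g_le p_small d_small.
rewrite natrX natrD !natrM !natrD expr2.
have p_ge0 : 0 <= (p%:R : R) by [].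
have d_ge0 : 0 <= (d%:R : R) by [].
have n_ge0 : 0 <= (n%:R : R) by [].
have full_part : 2%:R * p%:R * (2%:R * p%:R + d%:R + 2%:R) <=
                 (3 * g * n%:R) * (3 * g * n%:R + g * n%:R + 2) :> R.
  by apply: ler_pM; [nra | nra | lra | lra].
have thin_part : d%:R * n%:R <= (g * n%:R - 2) * n%:R :> R by apply: ler_wpM2r.
have g_small : g * g * (n%:R * n%:R) <= 1 / 100 * g * (n%:R * n%:R) :> R.
  by rewrite -mulrA -[X in _ <= X]mulrA; apply: ler_wpM2r; [nra | lra].
have gn_le : g * n%:R <= n%:R :> R by nra.
nra.
Qed.

Variables (R : realType) (g : R).
Hypothesis sigma : sigma_ge e (#|T|%:R - g * #|T|%:R).

Lemma card_Mthin_le : (#|Mthin|%:R : R) <= g * #|T|%:R - 2.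
Proof.
have nuv : ~~ e u v by apply/negP; apply: no_augmenting_path1 maxM u_exp v_exp uv.
have := sigma uv nuv; have := deg_uv_thin_add2_le.
rewrite -(ler_nat R) !natrD => *; lra.
Qed.

Lemma deg_gt_of_full_large : 3 * g * #|T|%:R < 2 * #|Mfull|%:R ->
  forall z, z != u -> z != v -> ~~ e z u -> ~~ e z v ->
  (#|Mshared| + 2 * #|Mthin| < deg e z)%N.
Proof.
move=> full_large z zu zv nzu nzv; rewrite -(ltr_nat R) natrD natrM.
have := sigma zu nzu; have := sigma zv nzv; have := card_Mthin_le.
have := deg_uv_thin_add2_le; have := card_classes_le; have := card_matching_add2_le.
rewrite -!(ler_nat R) !natrD !natrM => *; lra.
Qed.

Lemma sparse_case : 0 < g -> g <= 1 / 100 -> 2 * #|Mfull|%:R <= 3 * g * #|T|%:R ->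
  exists S : {set T}, gamma_independent e (2 * g) S /\ (#|T|%:R / 2 : R) <= #|S|%:R.
Proof.
move=> g_gt0 g_le full_small; exists sparse_set; split.
  apply: le_trans _ (sparse_edge_count g_gt0 g_le full_small card_Mthin_le).
  by rewrite ler_nat; apply: edges_in_sparse_set.
by have := card_sparse_set; rewrite -(ler_nat R) natrM => *; lra.
Qed.

Lemma split_case : ~~ odd #|T| -> 3 * g * #|T|%:R < 2 * #|Mfull|%:R ->
  exists C1 C2 : {set T},
    [/\ C1 != C2, components e = [set C1; C2], odd #|C1|, odd #|C2| &
        forall C, C \in [set C1; C2] ->
          (#|C|%:R : R) <= (1 - g) / 2 * #|T|%:R -> is_clique e C].
Proof.
move=> n_even /deg_gt_of_full_large deg_gt.
have closed_side := side_u_closed deg_gt.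
have small_clique (C : {set T}) : (forall x y, e x y -> (x \in C) = (y \in C)) ->
    (#|C|%:R : R) <= (1 - g) / 2 * #|T|%:R -> is_clique e C.
  by move=> closedC small; apply: sigma_ge_clique closedC sigma _; lra.
exists side_u, (~: side_u); split.
- by apply/eqP => /setP /(_ u); rewrite in_setC star_side_u // star_center.
- exact: components_side_u deg_gt.
- exact: odd_side_u deg_gt.
- by move: n_even; rewrite -(cardsC side_u) oddD (odd_side_u deg_gt) /= negbK.
- move=> C; rewrite !inE => /orP [] /eqP -> /small_clique; apply => // x y /closed_side.
  by rewrite !inE => ->.
Qed.

End ExposedPair.

Local Open Scope ring_scope.

Theorem proposition2p9 (R : realType) :
  exists gamma0 : R, 0 < gamma0 /\
  forall gamma : R, 0 < gamma -> gamma <= gamma0 ->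
  exists n0 : nat,
  forall (T : finType) (e : rel T),
    simple_graph e ->
    ~~ odd #|T| -> (n0 <= #|T|)%N ->
    sigma_ge e (#|T|%:R - gamma * #|T|%:R) ->
    has_perfect_matching e
    \/ (exists S : {set T}, gamma_independent e (2 * gamma : R) S /\
          (#|T|%:R / 2 : R) <= #|S|%:R)
    \/ (exists C1 C2 : {set T},
          [/\ C1 != C2, components e = [set C1; C2],
              odd #|C1|, odd #|C2| &
              forall C, C \in [set C1; C2] ->
                (#|C|%:R : R) <= (1 - gamma) / 2 * #|T|%:R -> is_clique e C]).
Proof.
exists (1 / 100); split => [|g g_gt0 g_le]; first lra.
exists 0%N => T e [e_sym e_irr] n_even _ sigma.
have [M maxM] := max_matching_exists e.
have [perfect|[u [v [u_exp v_exp uv]]]] := perfect_or_exposed_pair maxM n_even.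
  by left; exists M.
right; have [full_large|full_small] := ltrP (3 * g * #|T|%:R) (2 * #|Mfull e M u v|%:R).
  by right; apply: (split_case e_sym e_irr maxM u_exp v_exp uv sigma n_even full_large).
by left; apply: (sparse_case e_sym e_irr maxM u_exp v_exp uv sigma g_gt0 g_le full_small).
Qed.
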